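(* (i) Let $p,m,n\in\mathbb{N}$ and let $\{R_j\}_{j\in J}$ be a system of representatives of the right cosets in $\Gamma_0(nm,p)\backslash\Gamma_0(n,p)$. Then for distinct $j_1,j_2\in J$, $\Gamma_0(nm)R_{j_1}\cap\Gamma_0(nm)R_{j_2}=\emptyset$. (ii) Let $p$ be a prime with $p\mid n$, $e\in\mathbb{N}$, and let $\{R_j\}_{j\in J}$ be a system of representatives of the right cosets in $\Gamma_0(p^en,p)\backslash\Gamma_0(n,p)$ (i.e. $\Gamma_0(n,p)=\bigsqcup_{j}\Gamma_0(p^en,p)R_j$). Then $\{R_j\}_{j\in J}$ is also a system of representatives of the right cosets in $\Gamma_0(p^en)\backslash\Gamma_0(n)$.
   Context: $\Gamma_0(n)=\{\begin{pmatrix}a&b\\c&d\end{pmatrix}\in SL(2,\mathbb{Z}):n\mid c\}$; $\Gamma_0(n,m)=\{\begin{pmatrix}a&b\\c&d\end{pmatrix}\in SL(2,\mathbb{Z}):n\mid c,\ m\mid b\}$. *)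

From mathcomp Require Import all_boot all_order all_algebra.
Set Implicit Arguments. Unset Strict Implicit. Unset Printing Implicit Defensive.
Import Order.TTheory GRing.Theory Num.Theory.
Local Open Scope ring_scope.

Definition i0 : 'I_2 := ord0.
Definition i1 : 'I_2 := ord_max.

Definition SL2Z (A : 'M[int]_2) : bool := \det A == 1.

Definition Gamma0 (n : nat) (A : 'M[int]_2) : bool :=
  SL2Z A && (n%:Z %| A i1 i0)%Z.

Definition Gamma0nm (n m : nat) (A : 'M[int]_2) : bool :=
  SL2Z A && (n%:Z %| A i1 i0)%Z && (m%:Z %| A i0 i1)%Z.

Definition in_rcoset (H : pred 'M[int]_2) (R g : 'M[int]_2) : Prop :=
  exists2 h, H h & g = h *m R.

Definition rcoset_reps (H G : pred 'M[int]_2) (J : Type) (R : J -> 'M[int]_2)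
  : Prop :=
  (forall j, G (R j)) /\
  (forall g, G g -> exists j, in_rcoset H (R j) g) /\
  (forall j1 j2 g, in_rcoset H (R j1) g -> in_rcoset H (R j2) g -> j1 = j2).

(** A product [h1 R1 = h2 R2] with [h1, h2] in Γ0(N) and [R1, R2] in Γ0(n,p)
    forces [h1^-1 h2 = R1 R2^-1], which lies in Γ0(N) ∩ Γ0(n,p) ⊆ Γ0(N,p);
    so [R1] and [R2] already lie in the same Γ0(N,p)-coset, giving (i) and the
    injectivity half of (ii).  For the surjectivity half, any [g] in Γ0(n)
    with top row [(a, b)] is moved into Γ0(n,p) by the translation
    [[1, -ab], [0, 1]], which lies in every Γ0(N): its upper right entry
    becomes [b (1 - ad) = - b^2 c], and [p | n | c]. *)

From mathcomp Require Import all_boot all_algebra.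
From mathcomp Require Import ring.

Set Implicit Arguments.
Unset Strict Implicit.
Unset Printing Implicit Defensive.
Import GRing.Theory.
Local Open Scope ring_scope.

Section Matrix2.

Variable R : comNzRingType.
Implicit Types A B : 'M[R]_2.

Lemma lift0_i0 : lift i0 ord0 = i1 :> 'I_2. Proof. exact/val_inj. Qed.
Lemma lift0_i1 : lift i1 ord0 = i0 :> 'I_2. Proof. exact/val_inj. Qed.

Lemma mulmx2E A B i j : (A *m B) i j = A i i0 * B i0 j + A i i1 * B i1 j.
Proof. by rewrite !mxE !big_ord_recl big_ord0 /= lift0_i0 addr0. Qed.

Lemma det_mx2 A : \det A = A i0 i0 * A i1 i1 - A i0 i1 * A i1 i0.
Proof.
rewrite (expand_det_row _ i0) !big_ord_recl big_ord0 /cofactor !det_mx11 !mxE.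
by rewrite /= lift0_i0 lift0_i1 expr0 expr1; ring.
Qed.

Lemma adj_mx2E A :
  [/\ \adj A i0 i0 = A i1 i1, \adj A i0 i1 = - A i0 i1,
      \adj A i1 i0 = - A i1 i0 & \adj A i1 i1 = A i0 i0].
Proof.
rewrite !mxE /cofactor !det_mx11 !mxE /= lift0_i0 lift0_i1.
by rewrite expr0 expr1 expr2 !mulN1r opprK !mul1r.
Qed.

Lemma det_adj_mx2 A : \det (\adj A) = \det A.
Proof.
by case: (adj_mx2E A) => a00 a01 a10 a11; rewrite !det_mx2 a00 a01 a10 a11; ring.
Qed.

End Matrix2.

Definition shear (x : int) : 'M[int]_2 := 1%:M + x *: delta_mx i0 i1.

Lemma shearE x :
  [/\ shear x i0 i0 = 1, shear x i0 i1 = x, shear x i1 i0 = 0 & shear x i1 i1 = 1].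
Proof. by rewrite !mxE /= ?mulr0 ?mulr1 ?addr0 ?add0r. Qed.

Lemma SL2Z_mul_adj A : SL2Z A -> \adj A *m A = 1%:M.
Proof. by move/eqP=> dA; rewrite mul_adj_mx dA. Qed.

Lemma SL2Z_mul_mx_adj A : SL2Z A -> A *m \adj A = 1%:M.
Proof. by move/eqP=> dA; rewrite mul_mx_adj dA. Qed.

Lemma Gamma0nmE N p A : Gamma0nm N p A = Gamma0 N A && (p%:Z %| A i0 i1)%Z.
Proof. by []. Qed.

Lemma Gamma0E N A : Gamma0 N A = Gamma0nm N 1 A.
Proof. by rewrite Gamma0nmE dvd1z andbT. Qed.

Section Gamma0nmGroup.

Variables N p : nat.

Lemma Gamma0nm1 : Gamma0nm N p 1%:M.
Proof. by rewrite /Gamma0nm /SL2Z det1 eqxx !mxE /= !dvdz0. Qed.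

Lemma Gamma0nmM A B : Gamma0nm N p A -> Gamma0nm N p B -> Gamma0nm N p (A *m B).
Proof.
move=> /andP[/andP[dA cA] bA] /andP[/andP[dB cB] bB].
rewrite /Gamma0nm /SL2Z det_mulmx (eqP dA) (eqP dB) mulr1 eqxx !mulmx2E /=.
apply/andP; split; apply: rpredD;
  [exact: dvdz_mulr | exact: dvdz_mull | exact: dvdz_mull | exact: dvdz_mulr].
Qed.

Lemma Gamma0nm_adj A : Gamma0nm N p A -> Gamma0nm N p (\adj A).
Proof.
move=> /andP[/andP[/eqP dA cA] bA]; rewrite /Gamma0nm /SL2Z det_adj_mx2 dA eqxx.
by case: (adj_mx2E A) => _ -> -> _; rewrite !rpredN cA bA.
Qed.

Lemma in_rcoset_refl R : in_rcoset (Gamma0nm N p) R R.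
Proof. by exists 1%:M; [exact: Gamma0nm1 | rewrite mul1mx]. Qed.

End Gamma0nmGroup.

Lemma Gamma0M N A B : Gamma0 N A -> Gamma0 N B -> Gamma0 N (A *m B).
Proof. rewrite !Gamma0E; exact: Gamma0nmM. Qed.

Lemma Gamma0_adj N A : Gamma0 N A -> Gamma0 N (\adj A).
Proof. rewrite !Gamma0E; exact: Gamma0nm_adj. Qed.

Lemma Gamma0_shear N x : Gamma0 N (shear x).
Proof.
case: (shearE x) => s00 s01 s10 s11.
by rewrite /Gamma0 /SL2Z det_mx2 s00 s01 s10 s11 mulr0 subr0 mulr1 eqxx dvdz0.
Qed.

Lemma Gamma0nm_rcoset_of_eq N n p (h1 h2 R1 R2 : 'M[int]_2) :
    Gamma0 N h1 -> Gamma0 N h2 -> Gamma0nm n p R1 -> Gamma0nm n p R2 ->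
  h1 *m R1 = h2 *m R2 -> in_rcoset (Gamma0nm N p) R2 R1.
Proof.
move=> Gh1 Gh2 GR1 GR2 E.
have SLh1 : SL2Z h1 by case/andP: Gh1.
have SLR2 : SL2Z R2 by case/andP: GR2 => /andP[].
exists (\adj h1 *m h2); last by rewrite -mulmxA -E mulmxA SL2Z_mul_adj ?mul1mx.
have quotient_eq : \adj h1 *m h2 = R1 *m \adj R2.
  rewrite -[LHS]mulmx1 -(SL2Z_mul_mx_adj SLR2) mulmxA -(mulmxA _ h2) -E.
  by rewrite mulmxA SL2Z_mul_adj // mul1mx.
rewrite Gamma0nmE Gamma0M ?Gamma0_adj //= quotient_eq.
by case/andP: (Gamma0nmM GR1 (Gamma0nm_adj GR2)).
Qed.

Lemma rcoset_reps_Gamma0_inj N n p J (R : J -> 'M[int]_2) :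
    rcoset_reps (Gamma0nm N p) (Gamma0nm n p) R ->
  forall j1 j2 g, in_rcoset (Gamma0 N) (R j1) g -> in_rcoset (Gamma0 N) (R j2) g ->
  j1 = j2.
Proof.
move=> [GR [_ uniqR]] j1 j2 g [h1 Gh1 ->] [h2 Gh2 E].
apply: (uniqR j1 j2 (R j1)); first exact: in_rcoset_refl.
exact: Gamma0nm_rcoset_of_eq Gh1 Gh2 (GR j1) (GR j2) E.
Qed.

Lemma Gamma0nm_shear_mul n p g : (p %| n)%N -> Gamma0 n g ->
  Gamma0nm n p (shear (- (g i0 i0 * g i0 i1)) *m g).
Proof.
move=> /dvdnP[s ->] Gg; rewrite Gamma0nmE Gamma0M ?Gamma0_shear //=.
case/andP: Gg => /eqP + /dvdzP[q cq]; rewrite det_mx2 => dg.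
case: (shearE (- (g i0 i0 * g i0 i1))) => s00 s01 _ _.
have top_right : (shear (- (g i0 i0 * g i0 i1)) *m g) i0 i1 = - (g i0 i1 ^+ 2 * g i1 i0).
  by rewrite mulmx2E s00 s01 mul1r -[g i0 i1 in LHS]mulr1 -{1}dg; ring.
by rewrite top_right cq PoszM rpredN mulrA; apply: dvdz_mull; apply: dvdz_mull.
Qed.

Lemma rcoset_reps_Gamma0_cover N n p J (R : J -> 'M[int]_2) :
    (p %| n)%N -> rcoset_reps (Gamma0nm N p) (Gamma0nm n p) R ->
  forall g, Gamma0 n g -> exists j, in_rcoset (Gamma0 N) (R j) g.
Proof.
move=> pn [_ [coverR _]] g Gg.
have [j [k Gk tgE]] := coverR _ (Gamma0nm_shear_mul pn Gg).
set t := shear _ in tgE.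
have Gt : Gamma0 N t := Gamma0_shear N _.
exists j; exists (\adj t *m k).
  by apply: Gamma0M; [exact: Gamma0_adj | case/andP: Gk].
by rewrite -mulmxA -tgE mulmxA SL2Z_mul_adj ?mul1mx //; case/andP: Gt.
Qed.

Lemma rcoset_reps_Gamma0 N n p J (R : J -> 'M[int]_2) :
    (p %| n)%N -> rcoset_reps (Gamma0nm N p) (Gamma0nm n p) R ->
  rcoset_reps (Gamma0 N) (Gamma0 n) R.
Proof.
move=> pn reps; split; [|split].
- by case: reps => GR _ j; case/andP: (GR j).
- exact: rcoset_reps_Gamma0_cover reps.
- exact: rcoset_reps_Gamma0_inj reps.
Qed.

Theorem mainTheorem9 :
  (* (i) *)
  (forall (p m n : nat), (0 < p)%N -> (0 < m)%N -> (0 < n)%N ->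
   forall (J : Type) (R : J -> 'M[int]_2),
     rcoset_reps (Gamma0nm (n * m) p) (Gamma0nm n p) R ->
     forall j1 j2 : J, j1 <> j2 ->
       forall g : 'M[int]_2,
         ~ (in_rcoset (Gamma0 (n * m)) (R j1) g /\
            in_rcoset (Gamma0 (n * m)) (R j2) g))
  /\
  (* (ii) *)
  (forall (p n e : nat), prime p -> (0 < n)%N -> (p %| n)%N ->
   forall (J : Type) (R : J -> 'M[int]_2),
     rcoset_reps (Gamma0nm (p ^ e * n) p) (Gamma0nm n p) R ->
     rcoset_reps (Gamma0 (p ^ e * n)) (Gamma0 n) R).
Proof.
split.
- move=> p m n _ _ _ J R reps j1 j2 neq_j g [g_j1 g_j2].
  exact: neq_j (rcoset_reps_Gamma0_inj reps g_j1 g_j2).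
- move=> p n e _ _ pn J R; exact: rcoset_reps_Gamma0 pn.
Qed.
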